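(* Let $K\ge 2$ and $0\le e_1\le\dots\le e_K<\infty$. For nonempty $I\subseteq\{1,\dots,K\}$ write $A(I):=\frac1{|I|}\sum_{i\in I}e_i$. For nonempty $R\subseteq\{1,\dots,K\}$ and $j\in\{1,\dots,|R|\}$ let \[ \mathrm{AV}^R(j):=\min_{I\subseteq\{1,\dots,K\}:\ |R\setminus I|<j}A(I), \] and let $R_j$ denote $R$ with its $j-1$ largest elements removed. Then \[ \mathrm{AV}^R(j)=\min_{0\le i\le K}A\bigl(R_j\cup\{1,\dots,i\}\bigr), \] where $\{1,\dots,0\}:=\emptyset$. In particular, for $r\in\{1,\dots,K\}$, $R=\{K-r+1,\dots,K\}$ and $j\in\{1,\dots,r\}$, \[ \mathrm{AV}^{R}(j)=\min_{0\le i\le K-r}\frac{s_i+\sigma_j}{i+r-j+1},\qquad s_i:=e_1+\dots+e_i,\ \ \sigma_j:=e_{K-r+1}+\dots+e_{K-j+1}. \]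
   Context: Here ''the largest elements'' of $R$ are its largest indices, which correspond to the largest values since $e_1\le\dots\le e_K$; $s_0:=0$. *)

(* Indices {1,...,K} of the paper are represented 0-based by 'I_K:
   the ordinal k : 'I_K stands for the paper's index k+1. *)
From HB Require Import structures.
From mathcomp Require Import all_boot all_order all_algebra.
Set Implicit Arguments. Unset Strict Implicit. Unset Printing Implicit Defensive.
Import Order.TTheory GRing.Theory Num.Theory.
Local Open Scope ring_scope.

Definition avg (R : realFieldType) (K : nat) (e : 'I_K -> R) (I : {set 'I_K}) : R :=
  (\sum_(i in I) e i) / (#|I|%:R).

(* AV^Rs(j) = min over I with |Rs \ I| < j of A(I).  The seed A(setT) is itself
   a member of the family (|Rs \ setT| = 0 < j for j >= 1), so this fold is the minimum. *)
Definition AV (R : realFieldType) (K : nat) (e : 'I_K -> R) (Rs : {set 'I_K}) (j : nat) : R :=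
  \big[Num.min/avg e setT]_(I : {set 'I_K} | (#|Rs :\: I| < j)%N) avg e I.

(* Rs_j : Rs with its j-1 largest elements removed: x is kept iff at least j-1
   elements of Rs are strictly larger than x. *)
Definition Rj (K : nat) (Rs : {set 'I_K}) (j : nat) : {set 'I_K} :=
  [set x in Rs | (j.-1 <= #|[set y in Rs | x < y]|)%N].

Definition init_seg (K : nat) (i : nat) : {set 'I_K} := [set k : 'I_K | (k < i)%N].

Definition AV_formula (R : realFieldType) (K : nat) (e : 'I_K -> R) (Rs : {set 'I_K}) (j : nat) : R :=
  \big[Num.min/avg e (Rj Rs j)]_(i < K.+1) avg e (Rj Rs j :|: init_seg K i).

Definition s_ (R : realFieldType) (K : nat) (e : 'I_K -> R) (i : nat) : R :=
  \sum_(k : 'I_K | (k < i)%N) e k.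

Definition sigma_ (R : realFieldType) (K : nat) (e : 'I_K -> R) (r j : nat) : R :=
  \sum_(k : 'I_K | (K - r <= k <= K - j)%N) e k.

Definition top_set (K r : nat) : {set 'I_K} := [set k : 'I_K | (K - r <= k)%N].

Definition AV_top_formula (R : realFieldType) (K : nat) (e : 'I_K -> R) (r j : nat) : R :=
  \big[Num.min/(s_ e 0 + sigma_ e r j) / ((r - j + 1)%N%:R)]_(i < (K - r).+1)
     ((s_ e i + sigma_ e r j) / ((i + r - j + 1)%N%:R)).

From HB Require Import structures.
From mathcomp Require Import all_boot all_order all_algebra.
From mathcomp Require Import zify.
Import Order.TTheory GRing.Theory Num.Theory.
Local Open Scope ring_scope.

(** Since [e] is nonnegative and nondecreasing, Abel summation writes
    [sum_(x in S) e_x] as a nonnegative combination of the tail counts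
    [|S ∩ [t, K]|]; so of two sets of equal size, the one with pointwise
    smaller tail counts has the smaller average.  If [|R \ I| < j], the largest
    element of [R_j ∩ [t, K]] has at least [j - 1] larger elements in [R],
    while at most [j - 1] elements of [R ∩ [t, K]] lie outside [I]; hence every
    tail count of [R_j] is at most that of [I].  Padding [R_j] from below with
    [{1, ..., i}] up to the size of [I] preserves this, so
    [A(I) >= A(R_j ∪ {1, ..., i})]; conversely every [R_j ∪ {1, ..., i}] is
    itself admissible.  For [R = {K-r+1, ..., K}] we get
    [R_j = {K-r+1, ..., K-j+1}], disjoint from [{1, ..., i}] when [i <= K-r];
    larger [i] only add elements above all others, which cannot lower the
    average. *)

Definition final_seg (K t : nat) : {set 'I_K} := [set k : 'I_K | (t <= k)%N].

Definition tail_le {K : nat} (J I : {set 'I_K}) : Prop :=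
  forall t, (#|J :&: final_seg K t| <= #|I :&: final_seg K t|)%N.

Lemma cardsU_disjoint (T : finType) (A B : {set T}) :
  [disjoint A & B] -> #|A :|: B| = (#|A| + #|B|)%N.
Proof. by move=> dAB; apply/eqP; rewrite (leq_card_setU A B).2. Qed.

Section Segments.

Set Implicit Arguments. Unset Strict Implicit.

Variable K : nat.

Lemma init_seg0 : init_seg K 0 = set0.
Proof. by apply/setP => k; rewrite !inE. Qed.

Lemma init_segT : init_seg K K = setT.
Proof. by apply/setP => k; rewrite !inE ltn_ord. Qed.

Lemma final_seg0 : final_seg K 0 = setT.
Proof. by apply/setP => k; rewrite !inE. Qed.

Lemma subset_init_seg m n : (m <= n)%N -> init_seg K m \subset init_seg K n.
Proof. by move=> le_mn; apply/subsetP => k; rewrite !inE => /leq_trans; apply. Qed.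

Lemma card_init_seg i : (i <= K)%N -> #|init_seg K i| = i.
Proof.
elim: i => [|i IHi] lt_iK; first by rewrite init_seg0 cards0.
have -> : init_seg K i.+1 = Ordinal lt_iK |: init_seg K i.
  by apply/setP => k; rewrite !inE ltnS leq_eqVlt -val_eqE.
by rewrite cardsU1 IHi ?(ltnW lt_iK) // inE ltnn.
Qed.

Lemma card_final_seg t : (t <= K)%N -> #|final_seg K t| = (K - t)%N.
Proof.
move=> le_tK; have -> : final_seg K t = ~: init_seg K t.
  by apply/setP => k; rewrite !inE -leqNgt.
by rewrite cardsCs setCK card_init_seg // card_ord.
Qed.

Lemma card_setU_init_segS (A : {set 'I_K}) i :
  (#|A :|: init_seg K i.+1| <= #|A :|: init_seg K i|.+1)%N.
Proof.
have -> : A :|: init_seg K i.+1 = (A :|: init_seg K i) :|: [set k : 'I_K | k == i :> nat].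
  by apply/setP => k; rewrite !inE ltnS leq_eqVlt orbA orbAC.
apply: leq_trans (leq_card_setU _ _) _; rewrite -addn1 leq_add2l.
by apply/card_le1_eqP => x y; rewrite !inE => /eqP x_i /eqP y_i; apply: val_inj; rewrite /= x_i y_i.
Qed.

(* A discrete intermediate value argument: [#|A :|: init_seg K i|] grows by
   steps of at most one, from [#|A|] to [K]. *)
Lemma pad_init_seg (A I : {set 'I_K}) :
  (#|A| <= #|I|)%N -> exists2 i, (i <= K)%N & #|A :|: init_seg K i| = #|I|.
Proof.
move=> le_AI.
have : exists i, (#|I| <= #|A :|: init_seg K i|)%N.
  by exists K; rewrite init_segT setUT cardsT max_card.
case/ex_minnP => i fills min_i; exists i.
  by apply: min_i; rewrite init_segT setUT cardsT max_card.
apply/eqP; rewrite eqn_leq fills andbT.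
case: i fills min_i => [|i] _ min_i; first by rewrite init_seg0 setU0.
have : ~~ (#|I| <= #|A :|: init_seg K i|)%N by apply/negP => /min_i; rewrite ltnn.
by rewrite -ltnNge; have := card_setU_init_segS A i; lia.
Qed.

Lemma tail_le_card (J I : {set 'I_K}) : tail_le J I -> (#|J| <= #|I|)%N.
Proof. by move=> /(_ 0%N); rewrite final_seg0 !setIT. Qed.

Lemma tail_le_pad (A I : {set 'I_K}) i : tail_le A I ->
  #|A :|: init_seg K i| = #|I| -> tail_le (A :|: init_seg K i) I.
Proof.
move=> dom card_eq t; have [le_it|lt_ti] := leqP i t.
  rewrite setIUl (_ : init_seg K i :&: final_seg K t = set0) ?setU0; first exact: dom.
  by apply/setP => k; rewrite !inE; apply/negP => /andP[]; lia.
have low_I : (#|I :\: final_seg K t| <= #|(A :|: init_seg K i) :\: final_seg K t|)%N.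
  apply: subset_leq_card; apply/subsetP => k; rewrite !inE => /andP[k_lt_t _].
  by rewrite k_lt_t /=; apply/orP; right; lia.
have := cardsID (final_seg K t) I; have := cardsID (final_seg K t) (A :|: init_seg K i).
by rewrite card_eq; lia.
Qed.

Lemma card_setD_Rj (Rs : {set 'I_K}) j : (0 < j)%N -> (#|Rs :\: Rj Rs j| < j)%N.
Proof.
move=> j_gt0; have [->|[x0 x0D]] := set_0Vmem (Rs :\: Rj Rs j); first by rewrite cards0.
case: (arg_minnP (fun x : 'I_K => val x) x0D) => x xD x_min.
have /andP[xNRj xRs] : (x \notin Rj Rs j) && (x \in Rs) by rewrite -in_setD.
have D1_above : (Rs :\: Rj Rs j) :\ x \subset [set y in Rs | (x < y)%N].
  apply/subsetP => y; rewrite in_setD1 => /andP[y_neq_x yD].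
  move: (yD); rewrite in_setD => /andP[_ yRs].
  by rewrite inE yRs ltn_neqAle (x_min y yD) andbT val_eqE eq_sym.
rewrite ltnNge; apply/negP => many; apply: (negP xNRj).
rewrite inE xRs /=; apply: leq_trans (subset_leq_card D1_above).
by move: many; rewrite (cardsD1 x) in_setD xNRj xRs -subn1 leq_subLR.
Qed.

Lemma Rj_tail_le (Rs I : {set 'I_K}) j : (#|Rs :\: I| < j)%N -> tail_le (Rj Rs j) I.
Proof.
move=> small_diff t.
have [->|[x0 x0A]] := set_0Vmem (Rj Rs j :&: final_seg K t); first by rewrite cards0.
case: (arg_maxnP (fun x : 'I_K => val x) x0A) => x xA x_max.
have /setIP[xRj t_le_x] : x \in Rj Rs j :&: final_seg K t := xA.
move: xRj t_le_x; rewrite !inE => /andP[xRs many_above] t_le_x.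
set A := Rj Rs j :&: final_seg K t in x_max *.
have {}x_max y : y \in A -> (y <= x)%N := x_max y.
set G := [set y in Rs | (x < y)%N] in many_above.
have card_AG : #|A :|: G| = (#|A| + #|G|)%N.
  apply: cardsU_disjoint; rewrite disjoint_subset; apply/subsetP => y yA.
  by rewrite !inE; apply/negP => /andP[_]; have := x_max y yA; lia.
have AG_sub : A :|: G \subset Rs :&: final_seg K t.
  apply/subsetP => y; rewrite /A /G !inE.
  by case/orP => [/andP[/andP[-> _] ->] // | /andP[-> x_lt_y]] /=; lia.
have split_I : (#|Rs :&: final_seg K t| <= #|I :&: final_seg K t| + #|Rs :\: I|)%N.
  apply: leq_trans (leq_card_setU _ _); apply: subset_leq_card.
  by apply/subsetP => y; rewrite !inE; case/andP => -> ->; case: (y \in I).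
by have := subset_leq_card AG_sub; rewrite card_AG; lia.
Qed.

Lemma Rj_top_set r j : (r <= K)%N -> (0 < j <= r)%N ->
  Rj (top_set K r) j = init_seg K (K - j).+1 :\: init_seg K (K - r).
Proof.
move=> le_rK /andP[j_gt0 le_jr]; apply/setP => x.
rewrite /Rj !inE -leqNgt ltnS.
have [le_x|] //= := leqP (K - r) x.
have -> : [set y in top_set K r | (x < y)%N] = final_seg K x.+1.
  by apply/setP => y; rewrite !inE andb_idl //; lia.
by rewrite card_final_seg // -subn1; have := ltn_ord x; lia.
Qed.

Lemma card_Rj_top r j : (r <= K)%N -> (0 < j <= r)%N ->
  #|Rj (top_set K r) j| = (r - j + 1)%N.
Proof.
move=> le_rK /andP[j_gt0 le_jr]; rewrite Rj_top_set ?j_gt0 // cardsDS.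
  by rewrite !card_init_seg; lia.
by apply: subset_init_seg; lia.
Qed.

End Segments.

Section Averages.

Set Implicit Arguments. Unset Strict Implicit.

Variables (R : realFieldType) (K : nat) (e : 'I_K -> R).
Hypothesis e_ge0 : forall i, 0 <= e i.
Hypothesis e_mono : forall i k : 'I_K, (i <= k)%N -> e i <= e k.

Definition incr (t : 'I_K) : R :=
  if t is Ordinal m.+1 lt_mK then e t - e (Ordinal (ltnW lt_mK)) else e t.

Lemma incr_ge0 t : 0 <= incr t.
Proof.
case: t => [[|m] lt_mK] /=; first exact: e_ge0.
by rewrite subr_ge0; apply: e_mono => /=.
Qed.

Lemma sum_incr (x : 'I_K) : \sum_(t : 'I_K | (t <= x)%N) incr t = e x.
Proof.
case: x => m; elim: m => [|m IHm] lt_mK.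
  by rewrite (big_pred1 (Ordinal lt_mK)) // => t /=; rewrite leqn0 -val_eqE.
rewrite (bigD1 (Ordinal lt_mK)) //= (eq_bigl (fun t : 'I_K => (t <= m)%N)).
  by rewrite (IHm (ltnW lt_mK)) subrK.
by move=> t; rewrite -val_eqE /= andbC -ltn_neqAle.
Qed.

Lemma sum_tail_counts (S : {set 'I_K}) :
  \sum_(x in S) e x = \sum_(t : 'I_K) incr t * #|S :&: final_seg K t|%:R.
Proof.
under eq_bigr => x _ do rewrite -sum_incr.
rewrite (exchange_big_dep xpredT) //; apply: eq_bigr => t _.
rewrite (eq_bigl (mem (S :&: final_seg K t))) ?sumr_const ?mulr_natr // => x.
by rewrite !inE.
Qed.

Lemma ler_sum_tail_le (J I : {set 'I_K}) :
  tail_le J I -> \sum_(x in J) e x <= \sum_(x in I) e x.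
Proof.
move=> dom; rewrite !sum_tail_counts; apply: ler_sum => t _.
by rewrite ler_wpM2l ?incr_ge0 ?ler_nat.
Qed.

Lemma avg_le_tail (J I : {set 'I_K}) :
  #|J| = #|I| -> tail_le J I -> avg e J <= avg e I.
Proof.
move=> card_eq dom; rewrite /avg card_eq ler_wpM2r ?invr_ge0 ?ler0n //.
exact: ler_sum_tail_le.
Qed.

Lemma avg_le_extend (A B : {set 'I_K}) : A \subset B ->
  {in A & B :\: A, forall x y : 'I_K, (x <= y)%N} -> avg e A <= avg e B.
Proof.
move=> sAB below.
have [A0|A_gt0] := posnP #|A|.
  by rewrite /avg A0 invr0 mulr0 divr_ge0 ?ler0n ?sumr_ge0.
have sumB : \sum_(x in B) e x = \sum_(x in A) e x + \sum_(x in B :\: A) e x.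
  by rewrite (big_setID A) (setIidPr sAB).
have cardB : #|B| = (#|A| + #|B :\: A|)%N by rewrite -(cardsID A B) (setIidPr sAB).
have cross : #|B :\: A|%:R * \sum_(x in A) e x <= #|A|%:R * \sum_(y in B :\: A) e y.
  have -> : #|B :\: A|%:R * \sum_(x in A) e x = \sum_(y in B :\: A) \sum_(x in A) e x.
    by rewrite sumr_const mulr_natl.
  have -> : #|A|%:R * \sum_(y in B :\: A) e y = \sum_(y in B :\: A) \sum_(x in A) e y.
    by rewrite mulr_natl -sumrMnl; apply: eq_bigr => y _; rewrite sumr_const.
  by apply: ler_sum => y yD; apply: ler_sum => x xA; apply: e_mono; apply: below.
have card_gt0 : 0 < #|A|%:R + #|B :\: A|%:R :> R by rewrite -natrD ltr0n addn_gt0 A_gt0.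
rewrite /avg sumB cardB natrD ler_pdivrMr ?ltr0n // mulrAC ler_pdivlMr //.
by rewrite mulrDr mulrDl lerD2l mulrC [X in _ <= X]mulrC.
Qed.

Lemma AV_formula_le_avg (Rs I : {set 'I_K}) j :
  (#|Rs :\: I| < j)%N -> AV_formula e Rs j <= avg e I.
Proof.
move=> feasible; have dom := Rj_tail_le feasible.
have [i le_iK card_pad] := pad_init_seg (tail_le_card dom).
apply: le_trans (avg_le_tail card_pad (tail_le_pad dom card_pad)).
exact: (bigmin_le _ (Ordinal (le_iK : (i < K.+1)%N))).
Qed.

Lemma AV_eq_formula (Rs : {set 'I_K}) j : (0 < j)%N -> AV e Rs j = AV_formula e Rs j.
Proof.
move=> j_gt0; apply/le_anti/andP; split.
  apply: le_bigmin => [|i _]; apply: bigmin_le_cond; first exact: card_setD_Rj.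
  apply: leq_ltn_trans (card_setD_Rj Rs j_gt0); apply/subset_leq_card/setDS.
  exact: subsetUl.
apply: le_bigmin => [|I]; last exact: AV_formula_le_avg.
by apply: AV_formula_le_avg; rewrite setDT cards0.
Qed.

Lemma avg_top_pad r j i : (r <= K)%N -> (0 < j <= r)%N -> (i <= K - r)%N ->
  avg e (Rj (top_set K r) j :|: init_seg K i) =
  (s_ e i + sigma_ e r j) / (i + r - j + 1)%:R.
Proof.
move=> le_rK rj le_i; have /andP[j_gt0 le_jr] := rj.
have disj : [disjoint Rj (top_set K r) j & init_seg K i].
  by rewrite Rj_top_set // disjoint_subset; apply/subsetP => k; rewrite !inE; lia.
rewrite /avg cardsU_disjoint // card_Rj_top // card_init_seg; last by lia.
rewrite (eq_bigl [predU Rj (top_set K r) j & init_seg K i]); last by move=> k; rewrite inE.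
rewrite bigU // addrC; congr ((_ + _) / _%:R).
- by rewrite /sigma_ Rj_top_set //; apply: eq_bigl => k; rewrite !inE -leqNgt ltnS.
- by rewrite /s_; apply: eq_bigl => k; rewrite inE.
- lia.
Qed.

Lemma avg_top_pad_mono r j i : (r <= K)%N -> (0 < j <= r)%N -> (K - r <= i)%N ->
  avg e (Rj (top_set K r) j :|: init_seg K (K - r)) <=
  avg e (Rj (top_set K r) j :|: init_seg K i).
Proof.
move=> le_rK rj le_i; apply: avg_le_extend; first exact/setUS/subset_init_seg.
by move=> x y; rewrite Rj_top_set // !inE; case/andP: rj; lia.
Qed.

Lemma AV_top_eq r j : (1 <= r <= K)%N -> (1 <= j <= r)%N ->
  AV e (top_set K r) j = AV_top_formula e r j.
Proof.
move=> /andP[_ le_rK] rj; rewrite AV_eq_formula; last by case/andP: rj.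
have pad0 : avg e (Rj (top_set K r) j) = (s_ e 0 + sigma_ e r j) / (r - j + 1)%:R.
  by rewrite -[X in avg e X]setU0 -(init_seg0 K) avg_top_pad.
apply/le_anti/andP; split.
  apply: le_bigmin => [|i _]; first by rewrite -pad0 bigmin_le_id.
  have lt_iK : (i < K.+1)%N by have := ltn_ord i; lia.
  by rewrite -avg_top_pad //; [apply: (bigmin_le _ (Ordinal lt_iK)) | have := ltn_ord i; lia].
apply: le_bigmin => [|i _]; first by rewrite pad0 bigmin_le_id.
have [le_i|lt_i] := leqP i (K - r).
  by rewrite avg_top_pad //; apply: (bigmin_le _ (Ordinal (le_i : (i < (K - r).+1)%N))).
apply: le_trans (avg_top_pad_mono le_rK rj (ltnW lt_i)).
by rewrite avg_top_pad //; apply: (bigmin_le _ ord_max).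
Qed.

End Averages.

Theorem mainTheorem4 (R : realFieldType) (K : nat) (e : 'I_K -> R)
  (hK : (2 <= K)%N)
  (he0 : forall i, 0 <= e i)
  (hmono : forall i k : 'I_K, (i <= k)%N -> e i <= e k) :
  (forall (Rs : {set 'I_K}) (j : nat),
      Rs != set0 -> (1 <= j <= #|Rs|)%N ->
      AV e Rs j = AV_formula e Rs j) /\
  (forall r j : nat, (1 <= r <= K)%N -> (1 <= j <= r)%N ->
      AV e (top_set K r) j = AV_top_formula e r j).
Proof.
split; first by move=> Rs j _ /andP[j_gt0 _]; exact: AV_eq_formula.
by move=> r j; exact: AV_top_eq.
Qed.
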